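(* Let $(L^+,L^-)$ be a pair of fully transverse prelaminations of $S^1$. Define $\bar L^\pm:=\{(a,a')\in S^1\times S^1: a\neq a',\ \exists (a_n,a_n')\in L^\pm \text{ converging to } (a,a')\}$. Then for any subsets $\hat L^+,\hat L^-$ with $L^\pm\subseteq\hat L^\pm\subseteq\bar L^\pm$, the pair $(\hat L^+,\hat L^-)$ is a pair of fully transverse prelaminations.
   Context: Pairs $\{a_1,a_2\},\{b_1,b_2\}$ of distinct points of $S^1$ cross if $a_1,a_2$ lie in different components of $S^1\setminus\{b_1,b_2\}$. A prelamination is a set of unordered pairs of distinct points of $S^1$ (leaves) no two of which cross; pairs in $\bar L^\pm$ are regarded as unordered. $(L^+,L^-)$ is fully transverse if $L^+\cap L^-=\emptyset$, the set of endpoints of leaves of $L^+\cup L^-$ is dense in $S^1$, and for any $\alpha,\beta\in L^+\cup L^-$ there is a sequence $\alpha=\alpha_1,\dots,\alpha_k=\beta$ of leaves of $L^+\cup L^-$ with $\alpha_i$ crossing $\alpha_{i+1}$. *)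

From HB Require Import structures.
From mathcomp Require Import all_boot all_order all_algebra.
From mathcomp Require Import all_classical all_reals all_analysis.
Set Implicit Arguments. Unset Strict Implicit. Unset Printing Implicit Defensive.
Import Order.TTheory GRing.Theory Num.Theory.
Import numFieldNormedType.Exports.
Local Open Scope classical_set_scope.
Local Open Scope ring_scope.

Notation plane R := (R * R)%type.

Section Lam.
Variable R : realType.
Local Notation pt := (plane R).
Definition circle : set pt := [set p | p.1 ^+ 2 + p.2 ^+ 2 = 1].

(* A set of unordered pairs of points is encoded as a swap-symmetric set of
   ordered pairs: the unordered pair {a,b} belongs to it iff (a,b) does. *)
Definition upairs (L : set (pt * pt)) : Prop :=
  forall a b, L (a, b) -> L (b, a).

Definition cross (al be : pt * pt) : Prop :=
  let C := circle `\` [set be.1; be.2] in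
  [/\ C al.1, C al.2 &
      connected_component C al.1 <> connected_component C al.2].

Definition prelamination (L : set (pt * pt)) : Prop :=
  [/\ upairs L,
      (forall a b, L (a, b) -> [/\ circle a, circle b & a <> b]) &
      (forall al be, L al -> L be -> ~ cross al be)].

Definition same_leaf (x y : pt * pt) : Prop := x = y \/ x = (y.2, y.1).

Definition endpoints (L : set (pt * pt)) : set pt :=
  [set p | exists q, L (p, q)].

Definition fully_transverse (Lp Lm : set (pt * pt)) : Prop :=
  [/\ Lp `&` Lm = set0,
      circle `<=` closure (endpoints (Lp `|` Lm)) &
      (forall al be, (Lp `|` Lm) al -> (Lp `|` Lm) be ->
        exists (k : nat) (f : nat -> pt * pt),
          [/\ same_leaf (f 0%N) al, same_leaf (f k) be,
              (forall i, (i <= k)%N -> (Lp `|` Lm) (f i)) &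
              (forall i, (i < k)%N -> cross (f i) (f i.+1))])].

Definition Lbar (L : set (pt * pt)) : set (pt * pt) :=
  [set x | [/\ circle x.1, circle x.2, x.1 <> x.2 &
     exists u : nat -> pt * pt, (forall n, L (u n)) /\ u @ \oo --> x]].

End Lam.

From HB Require Import structures.
From mathcomp Require Import all_boot all_order all_algebra.
From mathcomp Require Import all_classical all_reals all_analysis.
From mathcomp Require Import ring lra.
Set Implicit Arguments. Unset Strict Implicit. Unset Printing Implicit Defensive.
Import Order.TTheory GRing.Theory Num.Theory.
Import numFieldNormedType.Exports.
Local Open Scope classical_set_scope.
Local Open Scope ring_scope.

(* Two chords of the circle cross iff the endpoints of one lie strictly on opposite sides of the
   line through the other ([straddle] is negative): each side of a chord meets the circle in a
   connected arc, and the orientation keeps its sign on each component of the circle minus the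
   chord. Strict crossing is therefore an open condition, so limits of leaves of a prelamination
   do not cross. Every chord x is crossed by a leaf of L^+ ∪ L^-: by density some leaves have an
   endpoint on each side of x, and along a crossing chain between two of them the property "has
   an endpoint left of x" is inherited unless a leaf crosses x, since two crossing chords meet
   at an interior point. This yields disjointness of the closures, and chains for the enlarged
   pair come from chains of L^+ ∪ L^- extended at both ends. *)

Lemma fst_cvg {T : Type} {U V : topologicalType} {F : set_system T} {FF : Filter F}
  (h : T -> U * V) (p : U * V) : h @ F --> p -> (fun t => (h t).1) @ F --> p.1.
Proof. by move=> hp; apply: cvg_comp hp _; exact: cvg_fst. Qed.

Lemma snd_cvg {T : Type} {U V : topologicalType} {F : set_system T} {FF : Filter F}
  (h : T -> U * V) (p : U * V) : h @ F --> p -> (fun t => (h t).2) @ F --> p.2.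
Proof. by move=> hp; apply: cvg_comp hp _; exact: cvg_snd. Qed.

Lemma nat_transition (P : nat -> Prop) k : P 0%N -> ~ P k ->
  exists2 i, (i < k)%N & P i /\ ~ P i.+1.
Proof.
elim: k => [|k IH] P0 Pk //; have [Pk'|nPk'] := pselect (P k); first by exists k.
by have [i ik Pi] := IH P0 nPk'; exists i => //; exact: ltnW.
Qed.

Lemma connected_sign_gt0 (R : realType) (T : topologicalType) (f : T -> R) (K : set T) x y :
  continuous f -> connected K -> (forall z, K z -> f z != 0) ->
  K x -> K y -> 0 < f x -> 0 < f y.
Proof.
move=> fc cK nz Kx Ky fx; rewrite ltNge; apply/negP => fy.
have /(@connected_intervalP R) iK : connected (f @` K).
  exact: connected_continuous_connected cK (continuous_subspaceT fc).
have [z Kz fz0] : (f @` K) 0.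
  by apply: (iK (f y) (f x)); [exists y | exists x | rewrite fy (ltW fx)].
by have := nz z Kz; rewrite fz0 eqxx.
Qed.

Section ChordGeometry.
Variable R : realType.
Local Notation pt := (plane R).

Definition sqnorm (p : pt) : R := p.1 ^+ 2 + p.2 ^+ 2.

Definition det2 (p q : pt) : R := p.1 * q.2 - p.2 * q.1.

Definition vec (p q : pt) : pt := (q.1 - p.1, q.2 - p.2).

Definition orient (b1 b2 p : pt) : R := det2 (vec b1 b2) (vec b1 p).

Definition straddle (al be : pt * pt) : R :=
  orient be.1 be.2 al.1 * orient be.1 be.2 al.2.

Definition chord (x : pt * pt) : Prop := [/\ circle x.1, circle x.2 & x.1 <> x.2].

Definition mix (l : R) (p q : pt) : pt :=
  ((1 - l) * p.1 + l * q.1, (1 - l) * p.2 + l * q.2).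
Arguments mix : simpl never.

Lemma circleE p : circle p = (sqnorm p = 1).
Proof. by []. Qed.

Lemma chord_swap b1 b2 : chord (b1, b2) -> chord (b2, b1).
Proof. by case=> /= cb1 cb2 bne; split => //; exact: nesym. Qed.

Lemma orient_swap b1 b2 p : orient b2 b1 p = - orient b1 b2 p.
Proof. by rewrite /orient /det2 /vec /=; ring. Qed.

Lemma orient_l b1 b2 : orient b1 b2 b1 = 0.
Proof. by rewrite /orient /det2 /vec /=; ring. Qed.

Lemma orient_r b1 b2 : orient b1 b2 b2 = 0.
Proof. by rewrite /orient /det2 /vec /=; ring. Qed.

Lemma orient_mix b1 b2 l p q :
  orient b1 b2 (mix l p q) = (1 - l) * orient b1 b2 p + l * orient b1 b2 q.
Proof. by rewrite /orient /det2 /vec /mix /=; ring. Qed.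

Lemma mix0 p q : mix 0 p q = p.
Proof. by case: p => x y; rewrite /mix /=; congr pair; ring. Qed.

Lemma mix1 p q : mix 1 p q = q.
Proof. by case: q => x y; rewrite /mix /=; congr pair; ring. Qed.

Lemma vec_sqnorm_gt0 p q : p <> q -> 0 < sqnorm (vec p q).
Proof.
case: p q => [x1 y1] [x2 y2] pq; rewrite /sqnorm /vec /= lt_def addr_ge0 ?sqr_ge0 // andbT.
rewrite paddr_eq0 ?sqr_ge0 // !sqrf_eq0 !subr_eq0.
by apply/negP => /andP[/eqP e1 /eqP e2]; apply: pq; rewrite e1 e2.
Qed.

Lemma circle_mix l p q : circle p -> circle q ->
  sqnorm (mix l p q) = 1 - l * (1 - l) * sqnorm (vec p q).
Proof.
rewrite /circle /mix /sqnorm /vec /= => p1 q1.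
have -> : ((1 - l) * p.1 + l * q.1) ^+ 2 + ((1 - l) * p.2 + l * q.2) ^+ 2 =
  (1 - l) * (p.1 ^+ 2 + p.2 ^+ 2) + l * (q.1 ^+ 2 + q.2 ^+ 2)
  - l * (1 - l) * ((q.1 - p.1) ^+ 2 + (q.2 - p.2) ^+ 2) by ring.
by rewrite p1 q1; ring.
Qed.

Lemma orient_eq0_mix b1 b2 p : b1 <> b2 -> orient b1 b2 p = 0 ->
  exists t, p = mix t b1 b2.
Proof.
move=> /vec_sqnorm_gt0; case: b1 b2 p => [x1 y1] [x2 y2] [u v].
rewrite /orient /det2 /vec /sqnorm /mix /= => D0 o0.
set D := (x2 - x1) ^+ 2 + (y2 - y1) ^+ 2 in D0 *.
have Dn : D != 0 by rewrite gt_eqF.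
set N := (u - x1) * (x2 - x1) + (v - y1) * (y2 - y1).
have eu : u * D = x1 * D + N * (x2 - x1).
  apply/eqP; rewrite -subr_eq0; apply/eqP.
  by rewrite -[RHS](mulr0 (y1 - y2)) -o0 /D /N; ring.
have ev : v * D = y1 * D + N * (y2 - y1).
  apply/eqP; rewrite -subr_eq0; apply/eqP.
  by rewrite -[RHS](mulr0 (x2 - x1)) -o0 /D /N; ring.
by exists (N / D); congr pair; apply: (mulIf Dn); [rewrite eu | rewrite ev]; field.
Qed.

Lemma circle_orient_eq0 b1 b2 p : chord (b1, b2) -> circle p ->
  orient b1 b2 p = 0 -> p = b1 \/ p = b2.
Proof.
move=> [/= cb1 cb2 bne] cp /(orient_eq0_mix bne) [t ep].
have d0 := vec_sqnorm_gt0 bne.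
move: cp; rewrite ep circleE circle_mix // => e.
have /eqP : t * (1 - t) * sqnorm (vec b1 b2) = 0 by lra.
rewrite !mulf_eq0 (gt_eqF d0) orbF subr_eq0 => /orP[/eqP-> | /eqP<-].
- by left; rewrite mix0.
- by right; rewrite mix1.
Qed.

Lemma chords_meet a1 a2 b1 b2 : circle a1 -> circle a2 -> chord (b1, b2) ->
  orient b1 b2 a1 * orient b1 b2 a2 < 0 ->
  exists l t, [/\ 0 < l < 1, 0 < t < 1 & mix l a1 a2 = mix t b1 b2].
Proof.
move=> ca1 ca2 [/= cb1 cb2 bne] s12.
have a12 : a1 <> a2 by move=> e; move: s12; rewrite e -expr2 ltNge sqr_ge0.
set s1 := orient b1 b2 a1 in s12 *; set s2 := orient b1 b2 a2 in s12 *.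
have sn : s1 - s2 != 0.
  by rewrite subr_eq0; apply/eqP => e; move: s12; rewrite e -expr2 ltNge sqr_ge0.
pose l := s1 / (s1 - s2).
have l01 : 0 < l < 1.
  have hl : l * (s1 - s2) ^+ 2 = s1 * (s1 - s2) by rewrite /l expr2 mulrA divfK.
  have d2 : 0 < (s1 - s2) ^+ 2 by rewrite exprn_even_gt0.
  by apply/andP; split; nra.
have /(orient_eq0_mix bne)[t e] : orient b1 b2 (mix l a1 a2) = 0.
  by rewrite orient_mix -/s1 -/s2 /l; field.
have t01 : 0 < t < 1.
  have := circle_mix l ca1 ca2; rewrite e circle_mix // => ed.
  have /andP[l0 l1] := l01; have da := vec_sqnorm_gt0 a12.
  have : 0 < l * (1 - l) * sqnorm (vec a1 a2) by rewrite mulr_gt0 // mulr_gt0 // subr_gt0.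
  have -> : l * (1 - l) * sqnorm (vec a1 a2) = t * (1 - t) * sqnorm (vec b1 b2) by lra.
  rewrite pmulr_lgt0 ?vec_sqnorm_gt0 // => tt.
  by apply/andP; split; nra.
by exists l, t.
Qed.

Lemma straddle_sym al be : chord al -> chord be ->
  straddle al be < 0 -> straddle be al < 0.
Proof.
case: al be => [a1 a2] [b1 b2] ca cb; have [/= ca1 ca2 _] := ca; have [/= cb1 cb2 bne] := cb.
rewrite /straddle /= => s.
have [l [t [/andP[l0 l1] /andP[t0 t1] e]]] := chords_meet ca1 ca2 cb s.
set z1 := orient a1 a2 b1; set z2 := orient a1 a2 b2.
have z : (1 - t) * z1 + t * z2 = 0.
  by rewrite -orient_mix -e orient_mix orient_l orient_r !mulr0 addr0.
have : z1 * z2 <= 0.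
  have h : t * (z1 * z2) = - ((1 - t) * z1 ^+ 2).
    by apply/eqP; rewrite -subr_eq0 -(mulr0 z1) -z; apply/eqP; ring.
  by rewrite -(pmulr_rle0 _ t0) h oppr_le0 mulr_ge0 ?sqr_ge0 // subr_ge0 ltW.
rewrite le_eqVlt => /orP[/eqP z0 | //]; exfalso.
have [z10 z20] : z1 = 0 /\ z2 = 0.
  by move/eqP: z0; rewrite mulf_eq0 => /orP[]/eqP z0; split => //; nra.
case: (circle_orient_eq0 ca cb1 z10) => e1; case: (circle_orient_eq0 ca cb2 z20) => e2;
  rewrite e1 e2 in bne s => //;
  by move: s; rewrite ?orient_l ?orient_r ?mulr0 ?mul0r ltxx.
Qed.
End ChordGeometry.

Section UpperArc.
Variable R : realType.
Local Notation pt := (plane R).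
Variable w : pt.
Local Notation r := (sqnorm w).
Hypothesis w_gt0 : 0 < r.

(* The point [p] of the circle with [det2 w p = t] on the side [(-1) ^+ b] of the diameter
   orthogonal to [w]; at [t = sqrt r] both sides meet. *)
Definition arc_pt (b : bool) (t : R) : pt :=
  ((- t * w.2 + (-1) ^+ b * Num.sqrt (r - t ^+ 2) * w.1) / r,
   (t * w.1 + (-1) ^+ b * Num.sqrt (r - t ^+ 2) * w.2) / r).

Let rn : r != 0. Proof. by rewrite gt_eqF. Qed.

Lemma det2_arc_pt b t : det2 w (arc_pt b t) = t.
Proof. by rewrite /det2 /arc_pt /sqnorm /=; field; exact: rn. Qed.

Lemma circle_arc_pt b t : t ^+ 2 <= r -> circle (arc_pt b t).
Proof.
move=> tr; rewrite circleE /sqnorm /arc_pt /=.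
set y := (-1) ^+ b * Num.sqrt (r - t ^+ 2).
have y2 : y ^+ 2 = r - t ^+ 2 by rewrite exprMn sqrr_sign mul1r sqr_sqrtr // subr_ge0.
rewrite !expr_div_n -mulrDl.
have -> : (- t * w.2 + y * w.1) ^+ 2 + (t * w.1 + y * w.2) ^+ 2 = (t ^+ 2 + y ^+ 2) * r.
  by rewrite /sqnorm; ring.
by rewrite y2 subrKC -expr2 divff // expf_neq0.
Qed.

Lemma arc_pt_top b : arc_pt b (Num.sqrt r) = arc_pt false (Num.sqrt r).
Proof. by rewrite /arc_pt sqr_sqrtr ?ltW // subrr sqrtr0 !mulr0 !mul0r. Qed.

Lemma arc_pt_continuous b : continuous (arc_pt b).
Proof.
move=> t.
have sq : (fun s => Num.sqrt (r - s ^+ 2)) @ t --> Num.sqrt (r - t ^+ 2).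
  have sq2 : (fun s => r - s ^+ 2) @ t --> r - t ^+ 2.
    by apply: cvgB; [exact: cvg_cst | exact: exprn_continuous].
  exact: cvg_comp _ _ sq2 (@sqrt_continuous R _).
have y : (fun s => (-1) ^+ b * Num.sqrt (r - s ^+ 2)) @ t -->
    (-1) ^+ b * Num.sqrt (r - t ^+ 2) by apply: cvgM => //; exact: cvg_cst.
have x : (fun s : R => s) @ t --> t by exact: cvg_id.
have nx : (fun s : R => - s) @ t --> - t by exact: cvgN.
by apply: (@cvg_pair _ _ _ _ (nbhs _) (nbhs _)); apply: cvgM;
  [|exact: cvg_cst| |exact: cvg_cst]; apply: cvgD; apply: cvgM => //; exact: cvg_cst.
Qed.

Lemma circle_arc_ptE p : circle p ->
  det2 w p ^+ 2 <= r /\ p = arc_pt (w.1 * p.1 + w.2 * p.2 < 0) (det2 w p).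
Proof.
case: p => u v; rewrite circleE /det2 /arc_pt /= => uv.
set y := w.1 * u + w.2 * v; set t := w.1 * v - w.2 * u.
have ty : t ^+ 2 + y ^+ 2 = r by rewrite -[RHS]mul1r -uv /t /y /sqnorm /=; ring.
split; first by rewrite -ty lerDl sqr_ge0.
have -> : r - t ^+ 2 = y ^+ 2 by rewrite -ty; ring.
rewrite sqrtr_sqr mulr_sign_norm.
by congr pair; apply: (mulIf rn); rewrite (divfK rn) /t /y /sqnorm; ring.
Qed.

Lemma circle_det2_bound p : circle p -> - Num.sqrt r <= det2 w p <= Num.sqrt r.
Proof.
move=> /circle_arc_ptE[h _]; have s0 := sqrtr_ge0 r.
have s2 : Num.sqrt r ^+ 2 = r by rewrite sqr_sqrtr // ltW.
by apply/andP; split; nra.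
Qed.

Lemma circle_det2_lt_top p q : circle p -> circle q -> p <> q ->
  det2 w p = det2 w q -> det2 w p < Num.sqrt r.
Proof.
move=> cp cq pq e; have /andP[_] := circle_det2_bound cp.
rewrite le_eqVlt => /orP[/eqP top | //]; exfalso; apply: pq.
have [_ ->] := circle_arc_ptE cp; have [_ ->] := circle_arc_ptE cq.
by rewrite -e top !arc_pt_top.
Qed.

Lemma upper_arc_connected h p q : circle p -> circle q ->
  h < det2 w p -> h < det2 w q ->
  exists2 A : set pt, connected A &
    [/\ A `<=` [set z | circle z /\ h < det2 w z], A p & A q].
Proof.
pose arc b s := arc_pt b @` `[s, Num.sqrt r].
have arc_conn b s : connected (arc b s).
  apply: connected_continuous_connected; first exact: segment_connected.
  exact/continuous_subspaceT/arc_pt_continuous.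
have arc_sub b s : - Num.sqrt r <= s -> h < s ->
    arc b s `<=` [set z | circle z /\ h < det2 w z].
  move=> s_ge hs z [t]; rewrite /= in_itv /= => /andP[st tr] <-.
  split; last by rewrite det2_arc_pt (lt_le_trans hs).
  have s0 := sqrtr_ge0 r; have s2 : Num.sqrt r ^+ 2 = r by rewrite sqr_sqrtr // ltW.
  by apply: circle_arc_pt; nra.
have arc_start c : circle c -> arc (w.1 * c.1 + w.2 * c.2 < 0) (det2 w c) c.
  move=> cc; have [_ ec] := circle_arc_ptE cc.
  exists (det2 w c); last by rewrite -ec.
  by rewrite /= in_itv /= lexx; have /andP[_ ->] := circle_det2_bound cc.
move=> cp cq hp hq.
exists (arc (w.1 * p.1 + w.2 * p.2 < 0) (det2 w p) `|`
        arc (w.1 * q.1 + w.2 * q.2 < 0) (det2 w q)).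
- apply: connectedU => //; exists (arc_pt false (Num.sqrt r)).
  split; exists (Num.sqrt r); rewrite ?arc_pt_top // /= in_itv /= lexx andbT.
  + by have /andP[] := circle_det2_bound cp.
  + by have /andP[] := circle_det2_bound cq.
- split; [move=> z [] | by left; exact: arc_start | by right; exact: arc_start].
  + by apply: arc_sub => //; have /andP[] := circle_det2_bound cp.
  + by apply: arc_sub => //; have /andP[] := circle_det2_bound cq.
Qed.
End UpperArc.

Section Crossing.
Variable R : realType.
Local Notation pt := (plane R).

Lemma orient_det2 (b1 b2 p : pt) :
  orient b1 b2 p = det2 (vec b1 b2) p - det2 (vec b1 b2) b1.
Proof. by rewrite /orient /det2 /vec /=; ring. Qed.

Lemma half_circle_connected (b1 b2 p q : pt) : chord (b1, b2) -> circle p -> circle q ->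
  0 < orient b1 b2 p -> 0 < orient b1 b2 q ->
  exists2 A : set pt, connected A &
    [/\ A `<=` [set z | circle z /\ 0 < orient b1 b2 z], A p & A q].
Proof.
move=> [_ _ /= /vec_sqnorm_gt0 w0] cp cq; rewrite !orient_det2 !subr_gt0 => hp hq.
have [A cA [AH Ap Aq]] := upper_arc_connected w0 cp cq hp hq.
by exists A => //; split => // z /AH[cz hz]; split; rewrite // orient_det2 subr_gt0.
Qed.

Lemma exists_orient_gt0 (b1 b2 : pt) : chord (b1, b2) -> exists2 c, circle c & 0 < orient b1 b2 c.
Proof.
move=> [/= cb1 cb2 bne]; have w0 := vec_sqnorm_gt0 bne.
set top := Num.sqrt (sqnorm (vec b1 b2)).
exists (arc_pt (vec b1 b2) false top).
  by apply: circle_arc_pt => //; rewrite /top sqr_sqrtr ?lexx // ltW.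
rewrite orient_det2 det2_arc_pt // subr_gt0.
apply: circle_det2_lt_top cb1 cb2 bne _ => //.
by have /eqP := orient_r b1 b2; rewrite orient_det2 subr_eq0 => /eqP.
Qed.

Lemma cvg_orient {T : Type} {F : set_system T} {FF : Filter F} (h1 h2 h3 : T -> pt) b1 b2 p :
  h1 @ F --> b1 -> h2 @ F --> b2 -> h3 @ F --> p ->
  (fun t => orient (h1 t) (h2 t) (h3 t)) @ F --> orient b1 b2 p.
Proof.
move=> c1 c2 c3; rewrite /orient /det2 /vec /=.
have [x1 y1] := (fst_cvg c1, snd_cvg c1); have [x2 y2] := (fst_cvg c2, snd_cvg c2).
have [x3 y3] := (fst_cvg c3, snd_cvg c3).
by apply: cvgB; apply: cvgM; apply: cvgB.
Qed.

Lemma orient_continuous (b1 b2 : pt) : continuous (orient b1 b2).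
Proof. by move=> p; apply: cvg_orient; [exact: cvg_cst | exact: cvg_cst | exact: cvg_id]. Qed.

Lemma cvg_straddle {T : Type} {F : set_system T} {FF : Filter F} (u v : T -> pt * pt) al be :
  u @ F --> al -> v @ F --> be ->
  (fun t => straddle (u t) (v t)) @ F --> straddle al be.
Proof.
move=> cu cv; rewrite /straddle.
have [u1 u2] := (fst_cvg cu, snd_cvg cu); have [v1 v2] := (fst_cvg cv, snd_cvg cv).
by apply: cvgM; apply: cvg_orient.
Qed.

Lemma circle_off_chord (b1 b2 p : pt) : chord (b1, b2) ->
  (@circle R `\` [set b1; b2]) p <-> circle p /\ orient b1 b2 p != 0.
Proof.
move=> cb; split=> [[cp nb] | [cp op]].
- split=> //; apply/eqP => /(circle_orient_eq0 cb cp) e; exact: nb.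
- by split=> // -[] e; move: op; rewrite e ?orient_l ?orient_r eqxx.
Qed.

Lemma same_side_component (b1 b2 p q : pt) : chord (b1, b2) -> circle p -> circle q ->
  0 < orient b1 b2 p * orient b1 b2 q ->
  connected_component (@circle R `\` [set b1; b2]) p =
  connected_component (@circle R `\` [set b1; b2]) q.
Proof.
move=> cb cp cq pq.
suff [A cA [AH Ap Aq]] : exists2 A : set pt, connected A &
    [/\ A `<=` [set z | circle z /\ orient b1 b2 z != 0], A p & A q].
  apply: same_connected_component (connected_component_max Ap _ cA Aq).
  by move=> z /AH /(circle_off_chord _ cb).
have [hp | hp] := ltP 0 (orient b1 b2 p).
- have hq : 0 < orient b1 b2 q by rewrite -(pmulr_rgt0 _ hp).
  have [A cA [AH Ap Aq]] := half_circle_connected cb cp cq hp hq.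
  by exists A => //; split => // z /AH[cz hz]; split; rewrite // gt_eqF.
- have {}hp : orient b1 b2 p < 0.
    by rewrite lt_neqAle hp andbT; apply: contraTneq pq => ->; rewrite mul0r ltxx.
  have hq : orient b1 b2 q < 0 by rewrite -(nmulr_rgt0 _ hp).
  have [A cA [AH Ap Aq]] : exists2 A : set pt, connected A &
      [/\ A `<=` [set z | circle z /\ 0 < orient b2 b1 z], A p & A q].
    by apply: half_circle_connected (chord_swap cb) cp cq _ _; rewrite orient_swap oppr_gt0.
  exists A => //; split => // z /AH[cz]; rewrite orient_swap oppr_gt0 => hz.
  by split; rewrite // lt_eqF.
Qed.

Lemma component_orient_gt0 (b1 b2 p q : pt) : chord (b1, b2) ->
  connected_component (@circle R `\` [set b1; b2]) p q ->
  0 < orient b1 b2 p -> 0 < orient b1 b2 q.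
Proof.
move=> cb Kq; have Cp : (@circle R `\` [set b1; b2]) p.
  by case: Kq => B [Bp BC _] _; exact: BC.
apply: (connected_sign_gt0 (@orient_continuous b1 b2) (@component_connected _ _ p) _
  (connected_component_refl Cp) Kq).
by move=> z /connected_component_sub /(circle_off_chord _ cb)[].
Qed.

Lemma crossP (al be : pt * pt) : chord be ->
  cross al be <-> [/\ circle al.1, circle al.2 & straddle al be < 0].
Proof.
case: al be => a1 a2 [b1 b2] cb; rewrite /cross /straddle /=.
have CE z := circle_off_chord z cb.
split=> [[/CE[ca1 o1] /CE[ca2 o2] ne] | [ca1 ca2 s12]].
  split => //; rewrite ltNge; apply/negP => s12; apply: ne.
  by apply: same_side_component => //; rewrite lt_def mulf_neq0.
have o1 : orient b1 b2 a1 != 0 by apply: contraTneq s12 => ->; rewrite mul0r ltxx.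
have o2 : orient b1 b2 a2 != 0 by apply: contraTneq s12 => ->; rewrite mulr0 ltxx.
split; [exact/CE | exact/CE | move=> Ceq].
have K2 : connected_component (@circle R `\` [set b1; b2]) a1 a2.
  by rewrite Ceq; apply: connected_component_refl; apply/CE.
have [h1 | h1] := ltP 0 (orient b1 b2 a1).
  by move: s12; rewrite ltNge ltW // mulr_gt0 // (component_orient_gt0 cb K2).
have n1 : orient b2 b1 a1 > 0 by rewrite orient_swap oppr_gt0 lt_neqAle o1.
rewrite setUC in K2; have := component_orient_gt0 (chord_swap cb) K2 n1.
move: n1; rewrite !(orient_swap b1 b2) !oppr_gt0 => n1 n2.
by move: s12; rewrite ltNge ltW // nmulr_rgt0.
Qed.

Lemma cross_sym (al be : pt * pt) : chord al -> chord be -> cross al be -> cross be al.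
Proof.
move=> cal cbe /(crossP _ cbe)[_ _ s]; have [ca1 ca2 _] := cal; have [cb1 cb2 _] := cbe.
by apply/crossP => //; split => //; exact: straddle_sym.
Qed.
End Crossing.

Section Laminations.
Variable R : realType.
Local Notation pt := (plane R).
Implicit Types L : set (pt * pt).

Lemma prelamination_chord L x : prelamination L -> L x -> chord x.
Proof. by case: x => a b [_ hL _] /hL. Qed.

Lemma Lbar_chord L x : Lbar L x -> chord x.
Proof. by case. Qed.

Lemma subset_Lbar L : prelamination L -> L `<=` Lbar L.
Proof.
move=> pL x Lx; have [cx1 cx2 x12] := prelamination_chord pL Lx.
by split => //; exists (fun=> x); split => //; exact: cvg_cst.
Qed.

(* Strict crossing is an open condition, so it passes from the limits to the leaves. *)
Lemma Lbar_no_cross L (al be : pt * pt) :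
  prelamination L -> Lbar L al -> Lbar L be -> ~ cross al be.
Proof.
move=> pL [_ _ _ [u [Lu cu]]] bbe; have cbe := Lbar_chord bbe.
case: bbe => _ _ _ [v [Lv cv]] /(crossP _ cbe)[_ _ s].
have [n sn] := filter_ex (cvgr_lt _ (cvg_straddle cu cv) _ s).
have [cu1 cu2 _] := prelamination_chord pL (Lu n).
have [_ _ nc] := pL; apply: (nc _ _ (Lu n) (Lv n)).
by apply/crossP; [exact: prelamination_chord pL (Lv n) | split].
Qed.

Lemma prelamination_Lbar L Lh :
  prelamination L -> upairs Lh -> Lh `<=` Lbar L -> prelamination Lh.
Proof.
move=> pL uh hL; split => // [a b /hL /Lbar_chord // | al be /hL bal /hL bbe].
exact: Lbar_no_cross pL bal bbe.
Qed.
End Laminations.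

Section Transversality.
Variable R : realType.
Local Notation pt := (plane R).
Implicit Types L : set (pt * pt).

Definition has_end_left (x l : pt * pt) : Prop :=
  0 < orient x.1 x.2 l.1 \/ 0 < orient x.1 x.2 l.2.

(* [a] meets [b] at an interior point, where [orient x] is a convex combination of its values
   at the endpoints of either chord. *)
Lemma crossing_has_end_left (x a b : pt * pt) : chord a -> chord b -> cross a b ->
  0 <= straddle a x -> has_end_left x a -> has_end_left x b.
Proof.
case: a b => a1 a2 [b1 b2] [ca1 ca2 _] cb /(crossP _ cb)[_ _ s].
rewrite /straddle /has_end_left /= => ax ha.
have [l [t [/andP[l0 l1] /andP[t0 t1] e]]] := chords_meet ca1 ca2 cb s.
have : 0 < orient x.1 x.2 (mix t b1 b2).
  rewrite -e orient_mix; case: ha => h.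
  - have h2 : 0 <= orient x.1 x.2 a2 by rewrite -(pmulr_rge0 _ h).
    have : 0 < (1 - l) * orient x.1 x.2 a1 by rewrite mulr_gt0 // subr_gt0.
    have : 0 <= l * orient x.1 x.2 a2 by rewrite mulr_ge0 // ltW.
    lra.
  - have h1 : 0 <= orient x.1 x.2 a1 by rewrite -(pmulr_lge0 _ h).
    have : 0 <= (1 - l) * orient x.1 x.2 a1 by rewrite mulr_ge0 // subr_ge0 ltW.
    have : 0 < l * orient x.1 x.2 a2 by rewrite mulr_gt0.
    lra.
rewrite orient_mix.
case: (ltP 0 (orient x.1 x.2 b1)) => [|n1]; first by left.
case: (ltP 0 (orient x.1 x.2 b2)) => [|n2]; first by right.
have : (1 - t) * orient x.1 x.2 b1 <= 0 by rewrite mulr_ge0_le0 // subr_ge0 ltW.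
have : t * orient x.1 x.2 b2 <= 0 by rewrite mulr_ge0_le0 // ltW.
move=> ? ? ?; exfalso; lra.
Qed.

Lemma dense_end_left L (b1 b2 : pt) :
  @circle R `<=` closure (endpoints L) -> chord (b1, b2) ->
  exists2 l, L l & 0 < orient b1 b2 l.1.
Proof.
move=> dense cb; have [c cc oc] := exists_orient_gt0 cb.
have nb : nbhs c [set p | 0 < orient b1 b2 p].
  exact: cvgr_gt _ (@orient_continuous _ b1 b2 c) _ oc.
by have [p [[q Lpq] op]] := dense c cc _ nb; exists (p, q).
Qed.

Lemma exists_leaf_crossing Lp Lm (x : pt * pt) : prelamination Lp -> prelamination Lm ->
  fully_transverse Lp Lm -> chord x -> exists2 l, (Lp `|` Lm) l & cross l x.
Proof.
move=> pLp pLm [_ dense chain] cx.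
have chordL l : (Lp `|` Lm) l -> chord l.
  by case=> Ll; [exact: prelamination_chord pLp Ll | exact: prelamination_chord pLm Ll].
have [//|none] := pselect (exists2 l, (Lp `|` Lm) l & cross l x); exfalso.
have nx l : (Lp `|` Lm) l -> 0 <= straddle l x.
  move=> Ll; rewrite leNgt; apply/negP => s; apply: none; exists l => //.
  by have [? ? _] := chordL l Ll; apply/crossP.
case: x cx nx none => x1 x2 cx nx _.
have [l1 L1 o1] := dense_end_left dense cx.
have [l2 L2] := dense_end_left dense (chord_swap cx); rewrite orient_swap oppr_gt0 => o2.
have [k [f [f0 fk fL fc]]] := chain _ _ L1 L2.
pose P i := has_end_left (x1, x2) (f i).
have P0 : P 0%N by rewrite /P; case: f0 => ->; [left | right].
have nPk : ~ P k.
  have := nx _ (fL k (leqnn k)); rewrite /P /has_end_left /straddle /=.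
  case: fk => -> /=.
  - by rewrite nmulr_rge0 // => o22 [] ?; lra.
  - by rewrite nmulr_lge0 // => o22 [] ?; lra.
have [i ik [Pi nPi1]] := nat_transition P0 nPk.
apply: nPi1; apply: (crossing_has_end_left _ _ (fc i ik) (nx _ (fL i (ltnW ik))) Pi).
- exact/chordL/fL/ltnW.
- exact/chordL/fL.
Qed.
End Transversality.

Section Chains.
Variable R : realType.
Local Notation pt := (plane R).
Implicit Types L : set (pt * pt).

Definition crossing_chain L (al be : pt * pt) : Prop :=
  exists (k : nat) (f : nat -> pt * pt),
    [/\ same_leaf (f 0%N) al, same_leaf (f k) be,
        (forall i, (i <= k)%N -> L (f i)) &
        (forall i, (i < k)%N -> cross (f i) (f i.+1))].

Lemma cross_swapl (a1 a2 : pt) be : cross (a1, a2) be -> cross (a2, a1) be.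
Proof. by case=> ? ? ne; split => // /esym. Qed.

Lemma cross_swapr (al : pt * pt) b1 b2 : cross al (b1, b2) -> cross al (b2, b1).
Proof. by rewrite /cross setUC. Qed.

Lemma cross_same_leaf (al al' be be' : pt * pt) :
  same_leaf al al' -> same_leaf be be' -> cross al' be' -> cross al be.
Proof.
case: al' be' => a1 a2 [b1 b2] [|] -> [|] -> //=.
- exact: cross_swapr.
- exact: cross_swapl.
- by move/cross_swapl/cross_swapr.
Qed.

Lemma crossing_chain_sub L L' al be :
  L `<=` L' -> crossing_chain L al be -> crossing_chain L' al be.
Proof.
by move=> LL' [k [f [f0 fk fL fc]]]; exists k, f; split => // i /fL /LL'.
Qed.

Lemma crossing_chain_cons L (al l be : pt * pt) :
  L al -> cross al l -> crossing_chain L l be -> crossing_chain L al be.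
Proof.
move=> Lal cal [k [f [f0 fk fL fc]]].
exists k.+1, (fun n => if n is n'.+1 then f n' else al); split => //.
- by left.
- by case.
- case=> [_ | i /fc //]; exact: cross_same_leaf (or_introl erefl) f0 cal.
Qed.

Lemma crossing_chain_rcons L (al l be : pt * pt) :
  L be -> cross l be -> crossing_chain L al l -> crossing_chain L al be.
Proof.
move=> Lbe clb [k [f [f0 fk fL fc]]].
exists k.+1, (fun n => if (n <= k)%N then f n else be); split.
- by rewrite leq0n.
- by rewrite ltnn; left.
- by move=> i _; case: leqP => [/fL|].
- move=> i; rewrite ltnS => ik; rewrite ik; case: ltnP => [/fc // | ki].
  have -> : i = k by apply/eqP; rewrite eqn_leq ik.
  exact: cross_same_leaf fk (or_introl erefl) clb.
Qed.
End Chains.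

Lemma Lbar_disjoint (R : realType) (Lp Lm : set (plane R * plane R)) :
  prelamination Lp -> prelamination Lm -> fully_transverse Lp Lm ->
  Lbar Lp `&` Lbar Lm = set0.
Proof.
move=> pLp pLm ft; rewrite -subset0 => x [bp bm].
have [l [Ll|Ll] lx] := exists_leaf_crossing pLp pLm ft (Lbar_chord bp).
- exact: Lbar_no_cross pLp (subset_Lbar pLp Ll) bp lx.
- exact: Lbar_no_cross pLm (subset_Lbar pLm Ll) bm lx.
Qed.

Theorem lemma3p15 (R : realType) (Lp Lm Lhp Lhm : set (plane R * plane R)) :
  prelamination Lp -> prelamination Lm -> fully_transverse Lp Lm ->
  upairs Lhp -> upairs Lhm ->
  Lp `<=` Lhp -> Lhp `<=` Lbar Lp ->
  Lm `<=` Lhm -> Lhm `<=` Lbar Lm ->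
  prelamination Lhp /\ prelamination Lhm /\ fully_transverse Lhp Lhm.
Proof.
move=> pLp pLm ft uHp uHm sLp bLp sLm bLm.
have [_ dense chain] := ft.
have sub : Lp `|` Lm `<=` Lhp `|` Lhm := setUSS sLp sLm.
have chordH l : (Lhp `|` Lhm) l -> chord l by case=> [/bLp|/bLm] /Lbar_chord.
split; first exact: prelamination_Lbar pLp uHp bLp.
split; first exact: prelamination_Lbar pLm uHm bLm.
split.
- by rewrite -subset0 -(Lbar_disjoint pLp pLm ft); exact: setISS.
- by apply: subset_trans dense (closureS _) => p [q /sub]; exists q.
- move=> al be Hal Hbe.
  have [l1 L1 l1al] := exists_leaf_crossing pLp pLm ft (chordH _ Hal).
  have [l2 L2 l2be] := exists_leaf_crossing pLp pLm ft (chordH _ Hbe).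
  have chordL l : (Lp `|` Lm) l -> chord l by move/sub/chordH.
  apply: crossing_chain_cons Hal (cross_sym (chordL _ L1) (chordH _ Hal) l1al) _.
  apply: crossing_chain_rcons Hbe l2be _.
  exact: crossing_chain_sub sub (chain _ _ L1 L2).
Qed.
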